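(* Let $\mathcal I,\mathcal J,\mathcal K$ be ideals on $\omega$ and let $X$ be a discrete topological space. (1) For every sequence $(f_n)$ in $\mathcal C(X)$, $\mathcal I$-pointwise convergence to $0$ implies $\mathcal J$-quasi-normal convergence to $0$ if and only if $|X|<\mathfrak b_s(\mathcal J,\mathcal J,\mathcal I)$. (2) For every sequence $(f_n)$ in $\mathcal C(X)$, $\mathcal I$-pointwise convergence to $0$ implies $\mathcal K$-$\sigma$-uniform convergence to $0$ if and only if $|X|<\mathfrak b_\sigma(\mathcal I,\mathcal K)$. (3) For every sequence $(f_n)$ in $\mathcal C(X)$, $\mathcal J$-quasi-normal convergence to $0$ implies $\mathcal K$-$\sigma$-uniform convergence to $0$ if and only if $|X|<\mathrm{add}_\omega(\mathcal J,\mathcal K)$.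
   Context: An ideal on $\omega$ is a family $\mathcal I\subseteq\mathcal P(\omega)$ closed under finite unions and subsets, containing all finite sets, with $\omega\notin\mathcal I$. A real sequence $(a_n)$ is $\mathcal I$-convergent to $0$ if $\{n:|a_n|\ge\varepsilon\}\in\mathcal I$ for all $\varepsilon>0$. For a sequence $(f_n)$ of real functions on a set $X$: $\mathcal I$-pointwise convergence to $0$ means $(f_n(x))$ is $\mathcal I$-convergent to $0$ for each $x$; $\mathcal I$-uniform means $\{n:\exists x\in X\,(|f_n(x)|\ge\varepsilon)\}\in\mathcal I$ for each $\varepsilon>0$; $\mathcal I$-$\sigma$-uniform means $X=\bigcup_{k\in\omega}X_k$ with $(f_n\restriction X_k)$ $\mathcal I$-uniformly convergent to $0$ for each $k$; $\mathcal I$-quasi-normal means there is a sequence $(\varepsilon_n)$ of positive reals $\mathcal I$-convergent to $0$ with $\{n:|f_n(x)|\ge\varepsilon_n\}\in\mathcal I$ for each $x$. $\mathcal C(X)$ = continuous real functions on $X$. Cardinals (convention $\min\emptyset=\infty$, $\kappa<\infty$ for all cardinals): $\widehat{\mathcal P}_{\mathcal I}$ = sequences $(A_n)\in\mathcal I^\omega$ of pairwise disjoint sets; $\mathcal P_{\mathcal I}$ = those with $\bigcup_nA_n=\omega$; $\mathcal M_{\mathcal I}$ = sequences $(E_k)\in\mathcal I^\omega$ with $E_k\subseteq E_{k+1}$. $\mathfrak b_s(\mathcal I,\mathcal J,\mathcal K)=\min\{|\mathcal E|:\mathcal E\subseteq\widehat{\mathcal P}_{\mathcal K}$ and for every $(A_n)\in\mathcal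 P_{\mathcal J}$ there is $(E_n)\in\mathcal E$ with $\bigcup_n(A_{n+1}\cap\bigcup_{i\le n}E_i)\notin\mathcal I\}$; $\mathfrak b_\sigma(\mathcal I,\mathcal J)=\min\{|\mathcal E|:\mathcal E\subseteq\mathcal M_{\mathcal I}$ and for every $(A_n)\in\mathcal M_{\mathcal J}$ there is $(E_n)\in\mathcal E$ with $E_n\not\subseteq A_n$ for infinitely many $n\}$; $\mathrm{add}_\omega(\mathcal I,\mathcal J)=\min\{|\mathcal A|:\mathcal A\subseteq\mathcal I$ and for every $(B_n)\in\mathcal J^\omega$ there is $A\in\mathcal A$ with $A\not\subseteq B_n$ for all $n\}$. *)

From Stdlib Require Import Reals.
Open Scope R_scope.

Definition nset := nat -> Prop.

Definition finite_nset (A : nset) : Prop := exists N, forall n, A n -> (n < N)%nat.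

Definition is_ideal (I : nset -> Prop) : Prop :=
  (forall A B, I A -> I B -> I (fun n => A n \/ B n)) /\
  (forall A B : nset, (forall n, B n -> A n) -> I A -> I B) /\
  (forall A, finite_nset A -> I A) /\
  ~ I (fun _ => True).

Definition Iconv0 (I : nset -> Prop) (a : nat -> R) : Prop :=
  forall eps, eps > 0 -> I (fun n => Rabs (a n) >= eps).

Definition Ipointwise {X : Type} (I : nset -> Prop) (f : nat -> X -> R) : Prop :=
  forall x, Iconv0 I (fun n => f n x).

Definition Iuniform_on {X : Type} (I : nset -> Prop) (f : nat -> X -> R) (Y : X -> Prop) : Prop :=
  forall eps, eps > 0 -> I (fun n => exists x, Y x /\ Rabs (f n x) >= eps).

Definition Isigma_uniform {X : Type} (I : nset -> Prop) (f : nat -> X -> R) : Prop :=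
  exists Xk : nat -> X -> Prop,
    (forall x, exists k, Xk k x) /\ (forall k, Iuniform_on I f (Xk k)).

Definition Iquasi_normal {X : Type} (I : nset -> Prop) (f : nat -> X -> R) : Prop :=
  exists eps : nat -> R,
    (forall n, eps n > 0) /\ Iconv0 I eps /\
    (forall x, I (fun n => Rabs (f n x) >= eps n)).

Definition card_le (A B : Type) : Prop := exists g : A -> B, forall a a', g a = g a' -> a = a'.
Definition card_lt (A B : Type) : Prop := card_le A B /\ ~ card_le B A.

Definition hatP (K : nset -> Prop) (A : nat -> nset) : Prop :=
  (forall n, K (A n)) /\ (forall n m k, n <> m -> A n k -> A m k -> False).
Definition Ppart (K : nset -> Prop) (A : nat -> nset) : Prop :=
  hatP K A /\ (forall k, exists n, A n k).
Definition Mseq (I : nset -> Prop) (E : nat -> nset) : Prop :=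
  (forall k, I (E k)) /\ (forall k n, E k n -> E (S k) n).

(* |X| < b_s(I,J,K)  (min over the empty family is infinity, so the
   condition is: every witnessing family has cardinality > |X|). *)
Definition lt_b_s (I J K : nset -> Prop) (X : Type) : Prop :=
  forall EE : (nat -> nset) -> Prop,
    (forall E, EE E -> hatP K E) ->
    (forall A, Ppart J A -> exists E, EE E /\
        ~ I (fun m => exists n, A (S n) m /\ exists i, (i <= n)%nat /\ E i m)) ->
    card_lt X {E : nat -> nset | EE E}.

Definition lt_b_sigma (I J : nset -> Prop) (X : Type) : Prop :=
  forall EE : (nat -> nset) -> Prop,
    (forall E, EE E -> Mseq I E) ->
    (forall A, Mseq J A -> exists E, EE E /\
        (forall N, exists n, (n >= N)%nat /\ ~ (forall m, E n m -> A n m))) ->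
    card_lt X {E : nat -> nset | EE E}.

Definition lt_add_omega (I J : nset -> Prop) (X : Type) : Prop :=
  forall AA : nset -> Prop,
    (forall A, AA A -> I A) ->
    (forall B : nat -> nset, (forall n, J (B n)) ->
        exists A, AA A /\ forall n, ~ (forall m, A m -> B n m)) ->
    card_lt X {A : nset | AA A}.

From Stdlib Require Import Reals Classical ClassicalEpsilon ProofIrrelevance Lia Lra.
From mathcomp Require classical_sets.
Open Scope R_scope.

(* Each inequality |X| < b is used as "no family indexed by X witnesses b", applied to
   the family read off from a given sequence f: its dyadic level sets
   {m : |f_m(x)| >= 2^-n}, its dyadic bands {m : 2^-n <= |f_m(x)| < 2^-(n-1)}, or the sets
   {m : |f_m(x)| >= eps_m}.  Conversely, a witnessing family of size at most |X| is the
   image x |-> D x of a map defined on X, and is coded into the sequence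
   f_m(x) = 2^-min{n : m in D x n} (for add_omega, the indicator of D x); this sequence
   converges pointwise (resp. quasi-normally), and the stronger convergence granted by the
   hypothesis contradicts the witnessing property.  Since cardinals are comparable (Zorn),
   this gives |X| < b. *)

Lemma card_le_total (A B : Type) : card_le A B \/ card_le B A.
Proof.
  pose (partial_bijection := fun M : A * B -> Prop =>
    (forall a b b', M (a, b) -> M (a, b') -> b = b') /\
    (forall a a' b, M (a, b) -> M (a', b) -> a = a')).
  destruct (@classical_sets.Zorn_bigcup _ partial_bijection) as [M [[Mfun Minj] Mmax]].
  { intros F HF Hchain. split.
    - intros a b b' [M1 F1 H1] [M2 F2 H2].
      destruct (Hchain M1 M2 F1 F2) as [S | S].
      + exact (proj1 (HF M2 F2) a b b' (S _ H1) H2).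
      + exact (proj1 (HF M1 F1) a b b' H1 (S _ H2)).
    - intros a a' b [M1 F1 H1] [M2 F2 H2].
      destruct (Hchain M1 M2 F1 F2) as [S | S].
      + exact (proj2 (HF M2 F2) a a' b (S _ H1) H2).
      + exact (proj2 (HF M1 F1) a a' b H1 (S _ H2)). }
  (* A maximal partial bijection is total on [A] or onto [B]: else it extends by a new pair. *)
  destruct (classic (forall a, exists b, M (a, b))) as [Mtotal | Ha].
  { left. destruct (choice (fun a b => M (a, b)) Mtotal) as [g Hg].
    exists g. intros a a' E. apply (Minj a a' (g a)); [apply Hg | rewrite E; apply Hg]. }
  destruct (classic (forall b, exists a, M (a, b))) as [Msurj | Hb].
  { right. destruct (choice (fun b a => M (a, b)) Msurj) as [g Hg].
    exists g. intros b b' E. apply (Mfun (g b) b b'); [apply Hg | rewrite E; apply Hg]. }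
  apply not_all_ex_not in Ha as [a0 Ha0]. apply not_all_ex_not in Hb as [b0 Hb0].
  exfalso. apply (Mmax (fun p => M p \/ p = (a0, b0))).
  - split; [intros p Hp; left; exact Hp |].
    intros Hsub. apply Ha0. exists b0. exact (Hsub _ (or_intror eq_refl)).
  - split.
    + intros a b b' [H1 | H1] [H2 | H2].
      * exact (Mfun a b b' H1 H2).
      * injection H2 as -> ->. exfalso. apply Ha0. exists b. exact H1.
      * injection H1 as -> ->. exfalso. apply Ha0. exists b'. exact H2.
      * congruence.
    + intros a a' b [H1 | H1] [H2 | H2].
      * exact (Minj a a' b H1 H2).
      * injection H2 as -> ->. exfalso. apply Hb0. exists a. exact H1.
      * injection H1 as -> ->. exfalso. apply Hb0. exists a'. exact H2.
      * congruence.
Qed.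

Lemma card_lt_of_not_ge (X Y : Type) : ~ card_le Y X -> card_lt X Y.
Proof. intros H. split; [| exact H]. destruct (card_le_total X Y); tauto. Qed.

Lemma not_card_lt_image {X T : Type} (F : X -> T) : ~ card_lt X {t | exists x, t = F x}.
Proof.
  intros [_ Hnot]. apply Hnot.
  destruct (choice (fun (e : {t | exists x, t = F x}) x => proj1_sig e = F x)) as [g Hg].
  { intros [t Ht]. exact Ht. }
  exists g. intros [t Ht] [t' Ht'] E.
  pose proof (Hg (exist _ t Ht)) as Hx. pose proof (Hg (exist _ t' Ht')) as Hx'. simpl in Hx, Hx'.
  assert (t = t') as <- by congruence.
  f_equal. apply proof_irrelevance.
Qed.

Lemma decoding_of_card_le {X T : Type} (P Q : T -> Prop) (t0 : T) :
  Q t0 -> (forall t, P t -> Q t) -> card_le {t | P t} X ->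
  exists D : X -> T, (forall t, P t -> exists x, D x = t) /\ (forall x, Q (D x)).
Proof.
  intros Ht0 HPQ [g Hg].
  assert (Hdecode : forall x, exists t,
             (exists h : P t, g (exist _ t h) = x) \/ ((forall e, g e <> x) /\ t = t0)).
  { intros x. destruct (classic (exists e, g e = x)) as [[[t h] He] | Hno].
    - exists t. left. exists h. exact He.
    - exists t0. right. split; [| reflexivity]. intros e He. apply Hno. exists e. exact He. }
  destruct (choice _ Hdecode) as [D HD]. exists D. split.
  - intros t h. exists (g (exist _ t h)).
    destruct (HD (g (exist _ t h))) as [[h' He] | [Hno _]].
    + apply Hg in He. injection He as He. exact He.
    + exfalso. exact (Hno _ eq_refl).
  - intros x. destruct (HD x) as [[h _] | [_ ->]]; [apply HPQ, h | exact Ht0].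
Qed.

Section Ideal.
Context {I : nset -> Prop} (HI : is_ideal I).

Lemma ideal_sub {A B : nset} : I A -> (forall n, B n -> A n) -> I B.
Proof. intros HA HBA. exact (proj1 (proj2 HI) A B HBA HA). Qed.

Lemma ideal_union {A B : nset} : I A -> I B -> I (fun n => A n \/ B n).
Proof. exact (proj1 HI A B). Qed.

Lemma ideal_empty {A : nset} : (forall n, ~ A n) -> I A.
Proof.
  intros HA. apply (proj1 (proj2 (proj2 HI))). exists 0%nat. intros n Hn. destruct (HA n Hn).
Qed.

Lemma ideal_finite_union (A : nat -> nset) (N : nat) :
  (forall i, (i <= N)%nat -> I (A i)) -> I (fun m => exists i, (i <= N)%nat /\ A i m).
Proof.
  induction N as [| N IH]; intros HA.
  - apply (ideal_sub (HA 0%nat (le_n 0))).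
    intros m [i [Hi Him]]. replace i with 0%nat in Him by lia. exact Him.
  - apply (ideal_sub (ideal_union (IH (fun i Hi => HA i ltac:(lia))) (HA _ (le_n _)))).
    intros m [i [Hi Him]]. destruct (Nat.eq_dec i (S N)) as [-> | Hne]; [right; exact Him |].
    left. exists i. split; [lia | exact Him].
Qed.

End Ideal.

Lemma seq_decoding_of_card_le (I : nset -> Prop) (X : Type) (EE : (nat -> nset) -> Prop) :
  is_ideal I -> (forall E, EE E -> forall n, I (E n)) -> card_le {E | EE E} X ->
  exists D : X -> nat -> nset, (forall E, EE E -> exists x, D x = E) /\ (forall x n, I (D x n)).
Proof.
  intros HI HEE. apply (decoding_of_card_le EE (fun E => forall n, I (E n)) (fun _ _ => False)).
  - intros n. exact (ideal_empty HI (fun _ H => H)).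
  - exact HEE.
Qed.

Lemma lt_b_s_indexed (I J K : nset -> Prop) (X : Type) (F : X -> nat -> nset) :
  lt_b_s I J K X -> (forall x, hatP K (F x)) ->
  exists A, Ppart J A /\
    forall x, I (fun m => exists n, A (S n) m /\ exists i, (i <= n)%nat /\ F x i m).
Proof.
  intros Hlt HF. apply NNPP. intros Hno.
  apply (not_card_lt_image F), Hlt; [intros E [x ->]; apply HF |].
  intros A HA. apply NNPP. intros Hall. apply Hno. exists A. split; [exact HA |].
  intros x. apply NNPP. intros Hx. apply Hall. exists (F x). split; [exists x; reflexivity | exact Hx].
Qed.

Lemma lt_b_sigma_indexed (I J : nset -> Prop) (X : Type) (F : X -> nat -> nset) :
  lt_b_sigma I J X -> (forall x, Mseq I (F x)) ->
  exists A, Mseq J A /\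
    forall x, exists N, forall n, (n >= N)%nat -> forall m, F x n m -> A n m.
Proof.
  intros Hlt HF. apply NNPP. intros Hno.
  apply (not_card_lt_image F), Hlt; [intros E [x ->]; apply HF |].
  intros A HA. apply NNPP. intros Hall. apply Hno. exists A. split; [exact HA |].
  intros x. apply NNPP. intros Hx. apply Hall. exists (F x). split; [exists x; reflexivity |].
  intros N. apply NNPP. intros HN. apply Hx. exists N. intros n Hn m Hm.
  apply NNPP. intros Hnm. apply HN. exists n. split; [exact Hn |].
  intros Hsub. exact (Hnm (Hsub m Hm)).
Qed.

Lemma lt_add_omega_indexed (I J : nset -> Prop) (X : Type) (F : X -> nset) :
  lt_add_omega I J X -> (forall x, I (F x)) ->
  exists B : nat -> nset, (forall n, J (B n)) /\
    forall x, exists n, forall m, F x m -> B n m.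
Proof.
  intros Hlt HF. apply NNPP. intros Hno.
  apply (not_card_lt_image F), Hlt; [intros A [x ->]; apply HF |].
  intros B HB. apply NNPP. intros Hall. apply Hno. exists B. split; [exact HB |].
  intros x. apply NNPP. intros Hx. apply Hall. exists (F x). split; [exists x; reflexivity |].
  intros n Hsub. apply Hx. exists n. exact Hsub.
Qed.

Lemma lt_add_omega_incl (I J : nset -> Prop) (X : Type) :
  is_ideal J -> lt_add_omega I J X -> X -> forall S, I S -> J S.
Proof.
  intros HJ Hlt x0 S HS.
  destruct (lt_add_omega_indexed I J X (fun _ => S) Hlt (fun _ => HS)) as [B [HB Hcov]].
  destruct (Hcov x0) as [n Hn]. exact (ideal_sub HJ (HB n) Hn).
Qed.

Definition dyadic (n : nat) : R := / 2 ^ n.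

Lemma dyadic_pos n : 0 < dyadic n.
Proof. apply Rinv_0_lt_compat, pow_lt. lra. Qed.

Lemma dyadic_lt a b : (a < b)%nat -> dyadic b < dyadic a.
Proof. intros H. apply Rinv_0_lt_contravar; [apply pow_lt; lra | apply Rlt_pow; [lra | exact H]]. Qed.

Lemma dyadic_le a b : (a <= b)%nat -> dyadic b <= dyadic a.
Proof.
  intros H. destruct (Nat.eq_dec a b) as [-> | Hne]; [apply Rle_refl |].
  left. apply dyadic_lt. lia.
Qed.

Lemma dyadic_lt_eps e : e > 0 -> exists N, dyadic N < e.
Proof.
  intros He. destruct (pow_lt_1_zero (/ 2) ltac:(rewrite Rabs_right; lra) e He) as [N HN].
  exists N. unfold dyadic. rewrite <- pow_inv.
  specialize (HN N (le_n N)). rewrite Rabs_right in HN; [exact HN |].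
  left. apply pow_lt. lra.
Qed.

Lemma Iconv0_dyadic (I : nset -> Prop) : is_ideal I -> Iconv0 I dyadic.
Proof.
  intros HI e He. destruct (dyadic_lt_eps e He) as [N HN].
  apply (proj1 (proj2 (proj2 HI))). exists N. intros n Hn.
  rewrite Rabs_right in Hn by (left; apply dyadic_pos).
  destruct (Nat.lt_ge_cases n N) as [l | l]; [exact l |].
  pose proof (dyadic_le N n l). exfalso. lra.
Qed.

Lemma least_witness (P : nat -> Prop) :
  (exists n, P n) -> exists n, P n /\ forall i, P i -> (n <= i)%nat.
Proof.
  intros H.
  destruct (Wf_nat.dec_inh_nat_subset_has_unique_least_element P (fun n => classic (P n)) H)
    as [n [Hn _]].
  exists n. exact Hn.
Qed.

Definition dyadic_band (a : R) (n : nat) : Prop :=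
  a >= dyadic n /\ forall i, (i < n)%nat -> a < dyadic i.

Lemma dyadic_band_unique a n n' : dyadic_band a n -> dyadic_band a n' -> n = n'.
Proof.
  intros [Hn Hn_min] [Hn' Hn'_min].
  destruct (Nat.lt_total n n') as [l | [e | l]]; [| exact e |]; exfalso.
  - specialize (Hn'_min n l). lra.
  - specialize (Hn_min n' l). lra.
Qed.

Lemma dyadic_band_le a n : a >= dyadic n -> exists i, (i <= n)%nat /\ dyadic_band a i.
Proof.
  intros H. destruct (least_witness (fun i => a >= dyadic i)) as [i [Hi Hmin]]; [eauto |].
  exists i. split; [exact (Hmin n H) |]. split; [exact Hi |].
  intros j Hj. apply Rnot_ge_lt. intros Hge. specialize (Hmin j Hge). lia.
Qed.

Lemma dyadic_band_exists a : a > 0 -> exists n, dyadic_band a n.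
Proof.
  intros Ha. destruct (dyadic_lt_eps a Ha) as [N HN].
  destruct (dyadic_band_le a N) as [n [_ Hn]]; [lra |]. exists n. exact Hn.
Qed.

Lemma hatP_dyadic_band (I : nset -> Prop) (a : nat -> R) :
  is_ideal I -> Iconv0 I a -> hatP I (fun n m => dyadic_band (Rabs (a m)) n).
Proof.
  intros HI Ha. split.
  - intros n. apply (ideal_sub HI (Ha _ (dyadic_pos n))). intros m [Hm _]. exact Hm.
  - intros n n' m Hne Hn Hn'. exact (Hne (dyadic_band_unique _ _ _ Hn Hn')).
Qed.

Lemma Ppart_dyadic_band (I : nset -> Prop) (a : nat -> R) :
  is_ideal I -> (forall m, a m > 0) -> Iconv0 I a ->
  Ppart I (fun n m => dyadic_band (Rabs (a m)) n).
Proof.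
  intros HI Hpos Ha. split; [exact (hatP_dyadic_band I a HI Ha) |].
  intros m. apply dyadic_band_exists, Rabs_pos_lt. specialize (Hpos m). lra.
Qed.

Lemma Iconv0_dyadic_pred_index (I : nset -> Prop) (A : nat -> nset) (idx : nat -> nat) :
  is_ideal I -> (forall n, I (A n)) -> (forall m, A (idx m) m) ->
  Iconv0 I (fun m => dyadic (pred (idx m))).
Proof.
  intros HI HA Hidx e He. destruct (dyadic_lt_eps e He) as [N HN].
  apply (ideal_sub HI (ideal_finite_union HI A N (fun i _ => HA i))).
  intros m Hm. exists (idx m). split; [| apply Hidx].
  rewrite Rabs_right in Hm by (left; apply dyadic_pos).
  destruct (Nat.le_gt_cases (idx m) N) as [l | l]; [exact l |].
  pose proof (dyadic_le N (pred (idx m)) ltac:(lia)). exfalso. lra.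
Qed.

(* [2 ^ - min P], with the junk value [0] when [P] is empty. *)
Definition dyadic_min (P : nat -> Prop) : R :=
  match excluded_middle_informative (exists n, P n /\ forall i, P i -> (n <= i)%nat) with
  | left h => dyadic (proj1_sig (constructive_indefinite_description _ h))
  | right _ => 0
  end.

Lemma dyadic_min_nonneg P : 0 <= dyadic_min P.
Proof.
  unfold dyadic_min. destruct excluded_middle_informative; [left; apply dyadic_pos | apply Rle_refl].
Qed.

Lemma dyadic_min_ge P n : dyadic_min P >= dyadic n <-> exists i, (i <= n)%nat /\ P i.
Proof.
  unfold dyadic_min. destruct excluded_middle_informative as [h | h].
  - destruct (constructive_indefinite_description _ h) as [k [Pk Hk]]. simpl. split.
    + intros H. exists k. split; [| exact Pk].
      destruct (Nat.le_gt_cases k n) as [l | l]; [exact l |].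
      pose proof (dyadic_lt n k l). exfalso. lra.
    + intros [i [Hi Pi]]. apply Rle_ge, dyadic_le. specialize (Hk i Pi). lia.
  - split.
    + intros H. pose proof (dyadic_pos n). exfalso. lra.
    + intros [i [_ Pi]]. exfalso. apply h, least_witness. exists i. exact Pi.
Qed.

Definition index_code {X : Type} (D : X -> nat -> nset) (m : nat) (x : X) : R :=
  dyadic_min (fun n => D x n m).

Lemma index_code_ge {X : Type} (D : X -> nat -> nset) m x n :
  Rabs (index_code D m x) >= dyadic n <-> exists i, (i <= n)%nat /\ D x i m.
Proof.
  unfold index_code. rewrite Rabs_right by (apply Rle_ge, dyadic_min_nonneg).
  apply dyadic_min_ge.
Qed.

Lemma Ipointwise_index_code (I : nset -> Prop) {X : Type} (D : X -> nat -> nset) :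
  is_ideal I -> (forall x n, I (D x n)) -> Ipointwise I (index_code D).
Proof.
  intros HI HD x e He. destruct (dyadic_lt_eps e He) as [N HN].
  apply (ideal_sub HI (ideal_finite_union HI (D x) N (fun i _ => HD x i))).
  intros m Hm. apply (index_code_ge D m x N). lra.
Qed.

Definition indicator (A : nset) (m : nat) : R :=
  if excluded_middle_informative (A m) then 1 else 0.

Lemma Rabs_indicator_mem (A : nset) m : A m -> Rabs (indicator A m) = 1.
Proof.
  intros Hm. unfold indicator. destruct excluded_middle_informative as [_ | Hn].
  - apply Rabs_R1.
  - contradiction.
Qed.

Lemma indicator_ge_mem (A : nset) m e : e > 0 -> Rabs (indicator A m) >= e -> A m.
Proof.
  unfold indicator. destruct excluded_middle_informative as [Hm | _]; [intros; exact Hm |].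
  rewrite Rabs_R0. intros He H. exfalso. lra.
Qed.

Lemma Iquasi_normal_indicator (I : nset -> Prop) {X : Type} (D : X -> nset) :
  is_ideal I -> (forall x, I (D x)) -> Iquasi_normal I (fun m x => indicator (D x) m).
Proof.
  intros HI HD. exists dyadic. split; [exact dyadic_pos |]. split; [exact (Iconv0_dyadic I HI) |].
  intros x. apply (ideal_sub HI (HD x)). intros m Hm. exact (indicator_ge_mem _ _ _ (dyadic_pos m) Hm).
Qed.

Lemma lt_b_s_of_pointwise_quasi_normal (I J : nset -> Prop) (X : Type) :
  is_ideal I -> is_ideal J ->
  (forall f : nat -> X -> R, Ipointwise I f -> Iquasi_normal J f) -> lt_b_s J J I X.
Proof.
  intros HI HJ Himpl EE HEE Hwit. apply card_lt_of_not_ge. intros Hle.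
  destruct (seq_decoding_of_card_le I X EE HI (fun E HE => proj1 (HEE E HE)) Hle)
    as [D [Donto HD]].
  destruct (Himpl _ (Ipointwise_index_code I D HI HD)) as [eps [Hpos [Hconv Heps]]].
  destruct (Hwit _ (Ppart_dyadic_band J eps HJ Hpos Hconv)) as [E [HE Hnot]].
  destruct (Donto E HE) as [x <-].
  apply Hnot, (ideal_sub HJ (Heps x)). intros m [n [[_ Hband] Hhit]].
  pose proof (proj2 (index_code_ge D m x n) Hhit).
  pose proof (Hband n (Nat.lt_succ_diag_r n)). pose proof (RRle_abs (eps m)). lra.
Qed.

Lemma pointwise_quasi_normal_of_lt_b_s (I J : nset -> Prop) (X : Type) :
  is_ideal I -> is_ideal J -> lt_b_s J J I X ->
  forall f : nat -> X -> R, Ipointwise I f -> Iquasi_normal J f.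
Proof.
  intros HI HJ Hlt f Hf.
  destruct (lt_b_s_indexed J J I X (fun x n m => dyadic_band (Rabs (f m x)) n) Hlt
              (fun x => hatP_dyadic_band I _ HI (Hf x))) as [A [[[HAJ _] HAcov] Hsmall]].
  destruct (choice (fun m n => A n m) HAcov) as [idx Hidx].
  exists (fun m => dyadic (pred (idx m))). split; [intros m; apply dyadic_pos |]. split.
  - exact (Iconv0_dyadic_pred_index J A idx HJ HAJ Hidx).
  - (* on [A (S n)] the threshold is [dyadic n], so the band of [f m x] has index [<= n] *)
    intros x. apply (ideal_sub HJ (ideal_union HJ (HAJ 0%nat) (Hsmall x))).
    intros m Hm. generalize (Hidx m). revert Hm. destruct (idx m) as [| n]; intros Hm Hm_idx.
    + left. exact Hm_idx.
    + right. exists n. split; [exact Hm_idx |]. exact (dyadic_band_le _ n Hm).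
Qed.

Lemma lt_b_sigma_of_pointwise_sigma_uniform (I K : nset -> Prop) (X : Type) :
  is_ideal I -> is_ideal K ->
  (forall f : nat -> X -> R, Ipointwise I f -> Isigma_uniform K f) -> lt_b_sigma I K X.
Proof.
  intros HI HK Himpl EE HEE Hwit. apply card_lt_of_not_ge. intros Hle.
  destruct (seq_decoding_of_card_le I X EE HI (fun E HE => proj1 (HEE E HE)) Hle)
    as [D [Donto HD]].
  destruct (Himpl _ (Ipointwise_index_code I D HI HD)) as [Xk [Hcov Hunif]].
  set (level := fun k n m => exists x, Xk k x /\ Rabs (index_code D m x) >= dyadic n).
  set (A := fun n m => exists k, (k <= n)%nat /\ level k n m).
  assert (HA : Mseq K A).
  { split.
    - intros n. exact (ideal_finite_union HK (fun k => level k n) n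
                         (fun k _ => Hunif k _ (dyadic_pos n))).
    - intros n m [k [Hk [x [Hx Hm]]]]. exists k. split; [lia |]. exists x. split; [exact Hx |].
      pose proof (dyadic_le n (S n) (Nat.le_succ_diag_r n)). lra. }
  destruct (Hwit A HA) as [E [HE Hinf]]. destruct (Donto E HE) as [x <-].
  destruct (Hcov x) as [k Hk]. destruct (Hinf k) as [n [Hn Hnot]].
  apply Hnot. intros m Hm. exists k. split; [exact Hn |]. exists x. split; [exact Hk |].
  apply index_code_ge. exists n. split; [apply le_n | exact Hm].
Qed.

Lemma pointwise_sigma_uniform_of_lt_b_sigma (I K : nset -> Prop) (X : Type) :
  is_ideal I -> is_ideal K -> lt_b_sigma I K X ->
  forall f : nat -> X -> R, Ipointwise I f -> Isigma_uniform K f.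
Proof.
  intros HI HK Hlt f Hf.
  set (level := fun x n m => Rabs (f m x) >= dyadic n).
  assert (Hlevel : forall x, Mseq I (level x)).
  { intros x. split; [intros n; exact (Hf x _ (dyadic_pos n)) |].
    intros n m Hm. unfold level in *. pose proof (dyadic_le n (S n) (Nat.le_succ_diag_r n)). lra. }
  destruct (lt_b_sigma_indexed I K X level Hlt Hlevel) as [A [[HAK _] Hdom]].
  exists (fun k x => forall n, (n >= k)%nat -> forall m, level x n m -> A n m).
  split; [exact Hdom |].
  intros k e He. destruct (dyadic_lt_eps e He) as [N HN].
  apply (ideal_sub HK (HAK (max k N))). intros m [x [Hx Hm]].
  apply (Hx (max k N)); [lia |]. unfold level.
  pose proof (dyadic_le N (max k N) (Nat.le_max_r k N)). lra.
Qed.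

Lemma lt_add_omega_of_quasi_normal_sigma_uniform (J K : nset -> Prop) (X : Type) :
  is_ideal J -> is_ideal K ->
  (forall f : nat -> X -> R, Iquasi_normal J f -> Isigma_uniform K f) -> lt_add_omega J K X.
Proof.
  intros HJ HK Himpl AA HAA Hwit. apply card_lt_of_not_ge. intros Hle.
  destruct (decoding_of_card_le AA J (fun _ => False) (ideal_empty HJ (fun _ H => H)) HAA Hle)
    as [D [Donto HD]].
  destruct (Himpl _ (Iquasi_normal_indicator J D HJ HD)) as [Xk [Hcov Hunif]].
  destruct (Hwit (fun k m => exists x, Xk k x /\ Rabs (indicator (D x) m) >= 1))
    as [A [HA Hnot]]; [intros k; apply Hunif; lra |].
  destruct (Donto A HA) as [x <-]. destruct (Hcov x) as [k Hk].
  apply (Hnot k). intros m Hm. exists x. split; [exact Hk |].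
  rewrite (Rabs_indicator_mem _ _ Hm). apply Rle_refl.
Qed.

Lemma quasi_normal_sigma_uniform_of_lt_add_omega (J K : nset -> Prop) (X : Type) :
  is_ideal J -> is_ideal K -> lt_add_omega J K X ->
  forall f : nat -> X -> R, Iquasi_normal J f -> Isigma_uniform K f.
Proof.
  intros HJ HK Hlt f [eps [Hpos [Hconv Hsmall]]].
  set (big := fun x m => Rabs (f m x) >= eps m).
  destruct (lt_add_omega_indexed J K X big Hlt Hsmall) as [B [HB Hcov]].
  exists (fun n x => forall m, big x m -> B n m). split; [exact Hcov |].
  intros n d Hd. destruct (classic (inhabited X)) as [[x0] | Hempty].
  - apply (ideal_sub HK (ideal_union HK (HB n) (lt_add_omega_incl J K X HK Hlt x0 _ (Hconv d Hd)))).
    intros m [x [Hx Hm]]. destruct (classic (big x m)) as [Hbig | Hnot_big].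
    + left. exact (Hx m Hbig).
    + right. apply Rnot_ge_lt in Hnot_big. pose proof (RRle_abs (eps m)). lra.
  - apply (ideal_empty HK). intros m [x _]. exact (Hempty (inhabits x)).
Qed.

Theorem theorem4p6 (I J K : nset -> Prop) (X : Type) :
  is_ideal I -> is_ideal J -> is_ideal K ->
  ((forall f : nat -> X -> R, Ipointwise I f -> Iquasi_normal J f)
      <-> lt_b_s J J I X) /\
  ((forall f : nat -> X -> R, Ipointwise I f -> Isigma_uniform K f)
      <-> lt_b_sigma I K X) /\
  ((forall f : nat -> X -> R, Iquasi_normal J f -> Isigma_uniform K f)
      <-> lt_add_omega J K X).
Proof.
  intros HI HJ HK. split; [| split]; split.
  - exact (lt_b_s_of_pointwise_quasi_normal I J X HI HJ).
  - exact (pointwise_quasi_normal_of_lt_b_s I J X HI HJ).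
  - exact (lt_b_sigma_of_pointwise_sigma_uniform I K X HI HK).
  - exact (pointwise_sigma_uniform_of_lt_b_sigma I K X HI HK).
  - exact (lt_add_omega_of_quasi_normal_sigma_uniform J K X HJ HK).
  - exact (quasi_normal_sigma_uniform_of_lt_add_omega J K X HJ HK).
Qed.
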